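(* Let $G$ be a cyclic group of order $n\neq 4$ and let $\mathcal{A}$ be an $S$-ring over $G$ such that $\mathcal{A}=\mathbb{Z}G$ or $\mathcal{A}=\mathrm{Cyc}(K,G)$, where $K=\{\varepsilon,\sigma\}$ with $\varepsilon$ the identity and $\sigma:x\mapsto x^{-1}$. Suppose that $\varphi$ is an algebraic isomorphism from $\mathcal{A}$ to an $S$-ring $\mathcal{A}'$ over a finite abelian group $G'$. Then $G'\cong G$.
   Context: Let $G$ be a finite group with identity $e$; for $X\subseteq G$ write $\underline{X}=\sum_{x\in X}x\in\mathbb{Z}G$. An $S$-ring over $G$ is a subring $\mathcal{A}\subseteq\mathbb{Z}G$ for which there is a partition $\mathcal{S}(\mathcal{A})$ of $G$ (the basic sets) with $\{e\}\in\mathcal{S}(\mathcal{A})$, $X^{-1}\in\mathcal{S}(\mathcal{A})$ whenever $X\in\mathcal{S}(\mathcal{A})$, and $\mathcal{A}=\mathrm{Span}_{\mathbb{Z}}\{\underline{X}:X\in\mathcal{S}(\mathcal{A})\}$. Structure constants: $c^Z_{X,Y}$ is the number of $(x,y)\in X\times Y$ with $xy=z$ for fixed $z\in Z$. An algebraic isomorphism from $\mathcal{A}$ to an $S$-ring $\mathcal{A}'$ is a bijection $\varphi:\mathcal{S}(\mathcal{A})\to\mathcal{S}(\mathcal{A}')$ with $c^Z_{X,Y}=c^{Z^\varphi}_{X^\varphi,Y^\varphi}$ for all basic sets. For $K\leq\mathrm{Aut}(G)$, $\mathrm{Cyc}(K,G)$ is the $S$-ring over $G$ whose basic sets are the orbits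 of $K$ on $G$. *)

From mathcomp Require Import all_boot all_fingroup all_solvable.
Set Implicit Arguments. Unset Strict Implicit. Unset Printing Implicit Defensive.
Import GroupScope.

(* S-rings over a finite group gT (the group G is the whole type gT).
   An S-ring is identified with its set S of basic sets. *)

Definition sr_count (gT : finGroupType) (X Y : {set gT}) (z : gT) : nat :=
  #|[set p in setX X Y | p.1 * p.2 == z]|.

(* S is the partition of basic sets of an S-ring over gT:
   partition of G, {e} basic, closed under inversion, and the Z-span of the
   X̲ is closed under multiplication, i.e. each product X̲ Y̲ has coefficients
   constant on each basic set (this is literally "X̲ Y̲ is in the span"). *)
Definition is_Sring (gT : finGroupType) (S : {set {set gT}}) : Prop :=
  [/\ partition S [set: gT],
      [set 1] \in S,
      (forall X, X \in S -> X^-1 \in S) &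
      (forall X Y Z, X \in S -> Y \in S -> Z \in S ->
         forall z1 z2, z1 \in Z -> z2 \in Z -> sr_count X Y z1 = sr_count X Y z2)].

Definition sr_const (gT : finGroupType) (X Y Z : {set gT}) : nat :=
  sr_count X Y (repr Z).

Definition alg_iso (gT gT' : finGroupType) (S : {set {set gT}})
  (S' : {set {set gT'}}) (phi : {set gT} -> {set gT'}) : Prop :=
  [/\ {in S &, injective phi},
      phi @: S = S' &
      forall X Y Z, X \in S -> Y \in S -> Z \in S ->
        sr_const X Y Z = sr_const (phi X) (phi Y) (phi Z)].

(* the group ring ZG: all basic sets are singletons *)
Definition full_Sring (gT : finGroupType) : {set {set gT}} :=
  [set [set x] | x : gT].

Definition Cyc (gT : finGroupType) (K : {set {perm gT}}) : {set {set gT}} :=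
  [set orbit 'P K x | x : gT].

Definition inv_perm (gT : finGroupType) : {perm gT} := perm (@invg_inj gT).

Definition Kinv (gT : finGroupType) : {set {perm gT}} := [set 1; inv_perm gT].

From mathcomp Require Import all_boot all_fingroup all_solvable.
Set Implicit Arguments. Unset Strict Implicit. Unset Printing Implicit Defensive.
Import GroupScope.

(* An algebraic isomorphism phi preserves the relation "W \subset X * Y"
   between basic sets, since it holds iff c^W_{X,Y} > 0.  Hence phi fixes [1],
   commutes with inversion and preserves sizes, and for ZG the map
   x |-> phi [set x] is a group isomorphism.  For Cyc(K, G) with G = <[g]> of
   order n > 2 the basic sets are T_k = sympow g k = {g^k, g^-k}, and
   T_1 * T_(m+1) = T_(m+2) :|: T_m.  The image of T_1 is a pair {a, a^-1} with
   a != a^-1: otherwise it consists of two commuting involutions x, y, and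
   phi(T_2), of size 2 and not containing 1, would lie in {1, x * y}; #|T_2| = 2
   is where n <> 4 is used.  The product rule then propagates
   phi(T_m) = {a^m, a^-m} to all m, so a generates G' and has order n.
   For n <= 2 the S-ring Cyc(K, G) is ZG. *)

Lemma sr_count_gt0 (gT : finGroupType) (X Y : {set gT}) z :
  (0 < sr_count X Y z) = (z \in X * Y).
Proof.
apply/card_gt0P/mulsgP => [[[x y]] | [x y xX yY ->]].
  by rewrite !inE /= => /andP[/andP[xX yY] /eqP <-]; exists x y.
by exists (x, y); rewrite !inE /= xX yY eqxx.
Qed.

Lemma sr_count_inv (gT : finGroupType) (X : {set gT}) : sr_count X X^-1 1 = #|X|.
Proof.
rewrite -[RHS](card_imset (f := fun x => (x, x^-1))) => [|x y [] //].
apply: eq_card => -[x y]; rewrite !inE /=.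
apply/andP/imsetP => [[/andP[xX _] /eqP xy1] | [z zX [-> ->]]].
  by exists x => //; rewrite -(mulKg x y) xy1 mulg1.
by rewrite zX invgK zX mulgV.
Qed.

Section BasicSets.

Variables (gT : finGroupType) (S : {set {set gT}}).
Hypothesis S_Sring : is_Sring S.

Lemma Sring_cover x : exists2 X, X \in S & x \in X.
Proof.
case: S_Sring => /and3P[/eqP coverS _ _] _ _ _.
by apply/bigcupP; rewrite -/(cover S) coverS inE.
Qed.

Lemma Sring_eq X Y x : X \in S -> Y \in S -> x \in X -> x \in Y -> X = Y.
Proof.
case: S_Sring => /and3P[_ trivS _] _ _ _ XS YS xX xY.
by rewrite -(def_pblock trivS XS xX) (def_pblock trivS YS xY).
Qed.

Lemma Sring_neq0 X : X \in S -> exists x, x \in X.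
Proof.
case: S_Sring => /and3P[_ _ S_neq0] _ _ _ XS.
by apply/set0Pn; apply: contraNneq S_neq0 => <-.
Qed.

Lemma Sring1 : [set 1] \in S.
Proof. by case: S_Sring. Qed.

Lemma SringV X : X \in S -> X^-1 \in S.
Proof. by case: S_Sring => _ _ + _; apply. Qed.

Lemma Sring_mul_subset X Y W w : X \in S -> Y \in S -> W \in S ->
  w \in W -> w \in X * Y -> W \subset X * Y.
Proof.
case: S_Sring => _ _ _ const XS YS WS wW wXY; apply/subsetP => v vW.
by rewrite -sr_count_gt0 (const X Y W XS YS WS v w) // sr_count_gt0.
Qed.

Lemma sr_const_gt0 X Y W : X \in S -> Y \in S -> W \in S ->
  (0 < sr_const X Y W) = (W \subset X * Y).
Proof.
move=> XS YS WS; have [w wW] := Sring_neq0 WS; have reprW := mem_repr w wW.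
rewrite /sr_const sr_count_gt0; apply/idP/idP => [|/subsetP]; last exact.
exact: Sring_mul_subset reprW.
Qed.

End BasicSets.

Section AlgebraicIsomorphism.

Variables (gT gT' : finGroupType) (S : {set {set gT}}) (S' : {set {set gT'}}).
Variable phi : {set gT} -> {set gT'}.
Hypotheses (S_Sring : is_Sring S) (S'_Sring : is_Sring S').
Hypothesis phi_iso : alg_iso S S' phi.

Lemma alg_iso_mem X : X \in S -> phi X \in S'.
Proof. by case: phi_iso => _ <- _; apply: imset_f. Qed.

Lemma alg_iso_surj X' : X' \in S' -> exists2 X, X \in S & X' = phi X.
Proof. by case: phi_iso => _ <- _ /imsetP. Qed.

Lemma alg_iso_inj X Y : X \in S -> Y \in S -> phi X = phi Y -> X = Y.
Proof. by case: phi_iso => phi_inj _ _; apply: phi_inj. Qed.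

Lemma alg_iso_mul X Y W : X \in S -> Y \in S -> W \in S ->
  (phi W \subset phi X * phi Y) = (W \subset X * Y).
Proof.
case: phi_iso => _ _ const XS YS WS.
by rewrite -(sr_const_gt0 S'_Sring) -?(sr_const_gt0 S_Sring) ?alg_iso_mem // const.
Qed.

Lemma alg_iso_mulP X Y u : X \in S -> Y \in S -> u \in phi X * phi Y ->
  exists2 W, W \in S /\ W \subset X * Y & u \in phi W.
Proof.
move=> XS YS uXY; have [_ /alg_iso_surj[W WS ->] uW] := Sring_cover S'_Sring u.
exists W => //; split=> //; rewrite -alg_iso_mul //.
by apply: (Sring_mul_subset S'_Sring) uXY; rewrite ?alg_iso_mem.
Qed.

Lemma alg_iso1 : phi [set 1] = [set 1].
Proof.
have [Y YS phiY] := alg_iso_surj (Sring1 S'_Sring).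
have : Y \subset [set 1] * Y by rewrite -set1gE mul1g.
rewrite -alg_iso_mul ?Sring1 // -phiY -set1gE mulg1 set1gE sub1set => phi1.
exact: Sring_eq (alg_iso_mem (Sring1 S_Sring)) (Sring1 S'_Sring) phi1 (set11 1).
Qed.

Lemma alg_isoV X : X \in S -> phi X^-1 = (phi X)^-1.
Proof.
move=> XS; have XVS := SringV S_Sring XS; have [x xX] := Sring_neq0 S_Sring XS.
have : [set 1] \subset X * X^-1.
  by rewrite sub1set; apply/mulsgP; exists x x^-1; rewrite // ?mulgV // inE invgK.
rewrite -alg_iso_mul ?Sring1 // alg_iso1 sub1set => /mulsgP[u v uX vXV /eqP].
rewrite eq_sym -eq_invg_mul => /eqP uV.
apply: (Sring_eq S'_Sring (alg_iso_mem XVS) (SringV S'_Sring (alg_iso_mem XS)) vXV).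
by rewrite inE -uV invgK.
Qed.

Lemma alg_iso_card X : X \in S -> #|phi X| = #|X|.
Proof.
move=> XS; case: phi_iso => _ _ /(_ X X^-1 [set 1] XS).
rewrite SringV ?Sring1 // /sr_const alg_iso1 alg_isoV // !repr_set1.
by rewrite !sr_count_inv => /(_ isT isT) ->.
Qed.

End AlgebraicIsomorphism.

Lemma full_Sring_alg_iso_isog (gT gT' : finGroupType) (S' : {set {set gT'}})
    (phi : {set gT} -> {set gT'}) :
  is_Sring (full_Sring gT) -> is_Sring S' -> alg_iso (full_Sring gT) S' phi ->
  [set: gT] \isog [set: gT'].
Proof.
move=> S_Sring S'_Sring phi_iso; pose f x := repr (phi [set x]).
have S1 x : [set x] \in full_Sring gT by apply: imset_f.
have phi1E x : phi [set x] = [set f x].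
  rewrite /f; have /cards1P[y ->] : #|phi [set x]| == 1%N.
    by rewrite (alg_iso_card S_Sring S'_Sring phi_iso) ?cards1.
  by rewrite repr_set1.
have fM : {in [set: gT] &, {morph f : x y / x * y}}.
  move=> x y _ _; apply/set1P; rewrite -sub1set -mulg_set1 -!phi1E.
  by rewrite (alg_iso_mul S_Sring S'_Sring phi_iso) // mulg_set1.
apply/isogP; exists (Morphism fM).
  apply/injmP => x y _ _ /= fxy; apply/set1_inj/(alg_iso_inj phi_iso) => //.
  by rewrite !phi1E fxy.
apply/setP => u; rewrite morphimEdom inE; apply/imsetP.
have [_ /(alg_iso_surj phi_iso)[_ /imsetP[x _ ->] ->]] := Sring_cover S'_Sring u.
by rewrite phi1E => /set1P ->; exists x.
Qed.

Definition sympow (gT : finGroupType) (c : gT) (k : nat) : {set gT} :=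
  [set c ^+ k; (c ^+ k)^-1].

Section SymmetricPowers.

Variable gT : finGroupType.
Implicit Types c x : gT.

Lemma sympowV c k : (sympow c k)^-1 = sympow c k.
Proof.
by apply/setP => y; rewrite !inE eq_invg_sym (inj_eq invg_inj) orbC.
Qed.

Lemma sympow0 c : sympow c 0 = [set 1].
Proof. by rewrite /sympow expg0 invg1 setUid. Qed.

Lemma sympow_eq1 c k : (sympow c k == [set 1]) = (c ^+ k == 1).
Proof.
apply/eqP/eqP => [ck1 | ck1]; last by rewrite /sympow ck1 invg1 setUid.
by apply/set1P; rewrite -ck1 set21.
Qed.

Lemma sympow_mul c m :
  sympow c 1 * sympow c m.+1 = sympow c m.+2 :|: sympow c m.
Proof.
rewrite /sympow mulUg !mulgU !mulg_set1 expg1 -expgS -invMg -expgSr.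
have -> : c * c ^- m.+1 = c ^- m by rewrite expgSr invMg mulKVg.
have -> : c^-1 * c ^+ m.+1 = c ^+ m by rewrite expgS mulKg.
by apply/setP => y; rewrite !inE; do !case: eqP.
Qed.

Lemma sympowSS_eq c m : c^-1 != c -> c ^+ m.+2 \in sympow c m ->
  sympow c m.+2 = sympow c m.
Proof.
move=> c_neqV; rewrite /sympow !inE => /orP[]/eqP cm; last first.
  by rewrite cm invgK setUC.
move: cm; rewrite -addn2 expgD -{2}(mulg1 (c ^+ m)) => /mulgI /eqP.
by rewrite expgS expg1 -eq_invg_mul (negbTE c_neqV).
Qed.

Lemma orbit_Kinv x : orbit 'P (Kinv gT) x = [set x; x^-1].
Proof. by rewrite orbitE imsetU !imset_set1 /= /aperm perm1 permE. Qed.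

End SymmetricPowers.

Lemma inv_closed_card2 (gT : finGroupType) (A : {set gT}) :
  #|A| = 2 -> A^-1 = A ->
  (exists2 a, a^-1 != a & A = sympow a 1) \/
  exists x y, [/\ A = [set x; y], x^-1 = x & y^-1 = y].
Proof.
move=> /eqP/cards2P[x [y [x_neq_y ->]]] AV.
have memV z : z \in [set x; y] -> z^-1 \in [set x; y].
  by move=> zA; rewrite -AV inE invgK.
have /memV/set2P[xV | xV] := set21 x y; last first.
  by left; exists x; rewrite ?xV 1?eq_sym // /sympow expg1 xV.
have /memV/set2P[yV | yV] := set22 x y; last by right; exists x, y.
by move: x_neq_y; rewrite -xV -yV invgK eqxx.
Qed.

Lemma mul_involutions (gT : finGroupType) (x y : gT) :
  x^-1 = x -> y^-1 = y -> commute x y ->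
  [set x; y] * [set x; y] = [set 1; x * y].
Proof.
move=> xV yV cxy; rewrite mulUg !mulgU !mulg_set1 cxy.
rewrite -{1}xV -{3}yV !mulVg.
by apply/setP => z; rewrite !inE; do !case: eqP.
Qed.

Section InverseClosedCyclic.

Variables (gT gT' : finGroupType) (S' : {set {set gT'}}).
Variable phi : {set gT} -> {set gT'}.
Local Notation S := (Cyc (Kinv gT)).
Hypotheses (S_Sring : is_Sring S) (S'_Sring : is_Sring S').
Hypothesis phi_iso : alg_iso S S' phi.
Variable g : gT.
Hypotheses (gen_g : [set: gT] = <[g]>) (g_gt2 : 2 < #[g]) (g_neq4 : #[g] != 4).

Lemma sympow_Cyc k : sympow g k \in S.
Proof. by rewrite /sympow -orbit_Kinv imset_f. Qed.

Lemma Cyc_sympow X : X \in S -> exists k, X = sympow g k.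
Proof.
case/imsetP=> x _ ->; rewrite orbit_Kinv.
have /cycleP[k ->] : x \in <[g]> by rewrite -gen_g inE.
by exists k.
Qed.

Lemma alg_iso_sympowV k : (phi (sympow g k))^-1 = phi (sympow g k).
Proof. by rewrite -(alg_isoV S_Sring S'_Sring phi_iso) ?sympow_Cyc ?sympowV. Qed.

Lemma g_neqV : g^-1 != g.
Proof.
rewrite eq_invg_mul -expg2 -order_dvdn.
by apply: contraTN g_gt2 => /(dvdn_leq (isT : 0 < 2)); rewrite leqNgt.
Qed.

Lemma card_sympow2 : #|sympow g 2| = 2.
Proof.
rewrite cards2 eq_sym eq_invg_mul -expgD -order_dvdn.
suff -> : (#[g] %| 4) = false by [].
apply: contraNF g_neq4 => g_dvd4; have := dvdn_leq (isT : 0 < 4) g_dvd4.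
by move: g_gt2 g_dvd4; case: #[g] => [|[|[|[|[|n]]]]].
Qed.

Lemma alg_iso_sympow2_neq1 : 1 \notin phi (sympow g 2).
Proof.
apply/negP=> phiT2_1.
have /(alg_iso_inj phi_iso) : phi (sympow g 2) = phi [set 1].
  rewrite (alg_iso1 S_Sring S'_Sring phi_iso).
  by apply: (Sring_eq S'_Sring _ (Sring1 S'_Sring) phiT2_1 (set11 _));
    apply: alg_iso_mem (sympow_Cyc 2).
move/(_ (sympow_Cyc 2) (Sring1 S_Sring))/eqP; rewrite sympow_eq1 => /eqP g2_1.
by move: g_neqV; rewrite eq_invg_mul -expg2 g2_1 eqxx.
Qed.

Lemma alg_iso_sympowSS a m : a^-1 != a -> phi (sympow g 1) = sympow a 1 ->
  phi (sympow g m) = sympow a m -> phi (sympow g m.+1) = sympow a m.+1 ->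
  phi (sympow g m.+2) = sympow a m.+2.
Proof.
move=> a_neqV phiT1 phiTm phiTm1; set P := phi (sympow g m.+2).
have PS : P \in S' by apply: alg_iso_mem (sympow_Cyc _).
have TmS' : sympow a m \in S' by rewrite -phiTm; apply: alg_iso_mem (sympow_Cyc _).
have P_sub : P \subset sympow a m.+2 :|: sympow a m.
  rewrite -sympow_mul -phiT1 -phiTm1.
  rewrite (alg_iso_mul S_Sring S'_Sring phi_iso) ?sympow_Cyc //.
  by rewrite sympow_mul subsetUl.
have amP : a ^+ m.+2 \in P :|: sympow a m.
  have : a ^+ m.+2 \in phi (sympow g 1) * phi (sympow g m.+1).
    by rewrite phiT1 phiTm1 sympow_mul !inE eqxx.
  case/(alg_iso_mulP S_Sring S'_Sring phi_iso); rewrite ?sympow_Cyc // sympow_mul.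
  move=> W [WS W_sub] amW; have [j Wj] := Cyc_sympow WS.
  have gjW : g ^+ j \in W by rewrite Wj set21.
  have /setUP[gj | gj] := subsetP W_sub _ gjW.
    by rewrite inE /P -(Sring_eq S_Sring WS (sympow_Cyc _) gjW gj) amW.
  by rewrite inE -phiTm -(Sring_eq S_Sring WS (sympow_Cyc _) gjW gj) amW orbT.
have [am_m | am_notm] := boolP (a ^+ m.+2 \in sympow a m).
  rewrite (sympowSS_eq a_neqV am_m); have [p pP] := Sring_neq0 S'_Sring PS.
  apply: (Sring_eq S'_Sring PS TmS' pP).
  by move/subsetP/(_ p pP): P_sub; rewrite (sympowSS_eq a_neqV am_m) setUid.
move: amP; rewrite inE (negPf am_notm) orbF => amP.
apply/eqP; rewrite eqEsubset; apply/andP; split.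
  apply/subsetP => p pP; move/subsetP/(_ p pP)/setUP: P_sub => [//|pTm].
  by move: am_notm; rewrite -(Sring_eq S'_Sring PS TmS' pP pTm) amP.
apply/subsetP => z /set2P[->|->] //.
by rewrite /P -(alg_iso_sympowV m.+2) inE invgK.
Qed.

Hypothesis abelian_gT' : abelian [set: gT'].

Lemma alg_iso_sympow1 : exists2 a, a^-1 != a & phi (sympow g 1) = sympow a 1.
Proof.
have card_phiT1 : #|phi (sympow g 1)| = 2.
  rewrite (alg_iso_card S_Sring S'_Sring phi_iso) ?sympow_Cyc //.
  by rewrite cards2 expg1 eq_sym g_neqV.
have [//|[x [y [phiT1 xV yV]]]] := inv_closed_card2 card_phiT1 (alg_iso_sympowV 1).
exfalso.
have cxy : commute x y by apply: (centsP abelian_gT'); rewrite inE.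
have phiT2_sub : phi (sympow g 2) \subset [set 1; x * y].
  rewrite -mul_involutions // -phiT1.
  rewrite (alg_iso_mul S_Sring S'_Sring phi_iso) ?sympow_Cyc //.
  by rewrite sympow_mul subsetUl.
have : phi (sympow g 2) \subset [set x * y].
  apply/subsetP => z phiT2_z; move/subsetP/(_ z phiT2_z): phiT2_sub.
  by rewrite !inE; case: eqP phiT2_z => // -> /(negP alg_iso_sympow2_neq1).
move/subset_leq_card; rewrite cards1.
by rewrite (alg_iso_card S_Sring S'_Sring phi_iso (sympow_Cyc 2)) card_sympow2.
Qed.

Lemma Cyc_Kinv_alg_iso_isog : [set: gT] \isog [set: gT'].
Proof.
have [a a_neqV phiT1] := alg_iso_sympow1.
have phiT2 m :
    phi (sympow g m) = sympow a m /\ phi (sympow g m.+1) = sympow a m.+1.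
  elim: m => [|m [phiTm phiTm1]]; last by split=> //; apply: alg_iso_sympowSS.
  by rewrite !sympow0 (alg_iso1 S_Sring S'_Sring phi_iso).
have phiT m := (phiT2 m).1.
have gen_a : [set: gT'] = <[a]>.
  apply/eqP; rewrite eqEsubset subsetT andbT; apply/subsetP => u _.
  have [_ /(alg_iso_surj phi_iso)[_ /Cyc_sympow[k ->] ->]] :=
    Sring_cover S'_Sring u.
  by rewrite phiT => /set2P[]->; rewrite ?groupV mem_cycle.
have pow_eq1 k : (a ^+ k == 1) = (g ^+ k == 1).
  rewrite -!sympow_eq1 -phiT -(alg_iso1 S_Sring S'_Sring phi_iso).
  apply/eqP/eqP => [/(alg_iso_inj phi_iso) | ->] //.
  by apply; rewrite ?sympow_Cyc ?Sring1.
have order_a : #[a] = #[g].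
  apply/eqP; rewrite eqn_dvd !order_dvdn pow_eq1 -[g ^+ #[a] == 1]pow_eq1.
  by rewrite !expg_order !eqxx.
rewrite isog_cyclic_card /=; last by rewrite gen_g cycle_cyclic.
by rewrite gen_a gen_g cycle_cyclic -!orderE order_a eqxx.
Qed.

End InverseClosedCyclic.

Lemma Cyc_Kinv_full (gT : finGroupType) :
  (forall x : gT, x^-1 = x) -> Cyc (Kinv gT) = full_Sring gT.
Proof. by move=> invE; apply: eq_imset => x; rewrite orbit_Kinv invE setUid. Qed.

Lemma cycle_invg_id (gT : finGroupType) (g : gT) :
  #[g] <= 2 -> {in <[g]>, forall x, x^-1 = x}.
Proof.
move=> g_le2 _ /cycleP[k ->]; apply/eqP.
rewrite eq_invg_mul -expgD addnn -muln2 -order_dvdn dvdn_mull //.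
by case: #[g] (order_gt0 g) g_le2 => [|[|[]]].
Qed.

Theorem lemma5p1 (gT gT' : finGroupType) (S : {set {set gT}})
  (S' : {set {set gT'}}) (phi : {set gT} -> {set gT'}) :
  cyclic [set: gT] -> #|[set: gT]| <> 4 ->
  is_Sring S -> (S = full_Sring gT \/ S = Cyc (Kinv gT)) ->
  abelian [set: gT'] -> is_Sring S' -> alg_iso S S' phi ->
  [set: gT] \isog [set: gT'].
Proof.
move=> /cyclicP[g gen_g] card_neq4 S_Sring S_eq abelian_gT' S'_Sring phi_iso.
case: S_eq => S_eq; subst S.
  exact: full_Sring_alg_iso_isog S_Sring S'_Sring phi_iso.
have [g_gt2 | g_le2] := ltnP 2 #[g].
  apply: (Cyc_Kinv_alg_iso_isog S_Sring S'_Sring phi_iso gen_g g_gt2) => //.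
  by apply/eqP; rewrite orderE /= -gen_g.
rewrite Cyc_Kinv_full in S_Sring phi_iso.
  exact: full_Sring_alg_iso_isog S_Sring S'_Sring phi_iso.
by move=> x; apply: (cycle_invg_id g_le2); rewrite -gen_g inE.
Qed.
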